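(* Let $n\ge 4$ and let $G$ be a graph on vertex set $[n]$ with $e(G)>\binom{n-1}{2}+1$ or $\rho(G)>n-2$. For $2\le j\le\lceil n/2\rceil$ let $e_j=\{j,n+2-j\}$, and for $1\le k\le\lfloor n/2\rfloor$ let $e'_k=\{k,n+1-k\}$. Then (i) $\{e_3,\ldots,e_{\lceil n/2\rceil}\}\subseteq E(\mathcal{K}(G))$, and (ii) $\{e'_1,\ldots,e'_{\lfloor n/2\rfloor}\}\subseteq E(\mathcal{K}(G))$.
   Context: $e(G)$ is the number of edges and $\rho(G)$ the adjacency spectral radius of $G$. Kelmans transformation: for vertices $x,y$, $\mathcal{K}_{xy}(G)$ is obtained from $G$ by deleting all edges between $y$ and $N_G(y)\setminus(N_G(x)\cup\{x\})$ and adding all edges between $x$ and $N_G(y)\setminus(N_G(x)\cup\{x\})$. For $G$ on $[n]$, $\mathcal{K}(G)$ denotes the graph obtained by repeatedly applying $\mathcal{K}_{xy}$ for pairs $x<y$ until the graph is invariant under all $\mathcal{K}_{xy}$ with $x<y$ (the result is independent of the order of transformations). *)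

From HB Require Import structures.
From mathcomp Require Import all_boot all_order all_algebra all_field.
Set Implicit Arguments. Unset Strict Implicit. Unset Printing Implicit Defensive.
Import Order.TTheory GRing.Theory Num.Theory.

(* Vertex set [n] = {1,..,n} is represented by 'I_n, label v <-> ordinal v-1
   (so the order on labels is the order on ordinals).
   A graph is its edge set: a set of 2-element subsets of 'I_n. *)
Definition graph (n : nat) := {set {set 'I_n}}.

Definition simple_graph n (G : graph n) : Prop :=
  forall e, e \in G -> #|e| = 2.

Definition nedges n (G : graph n) : nat := #|G|.

Definition nbhd n (G : graph n) (x : 'I_n) : {set 'I_n} :=
  [set y | [set x; y] \in G].

Definition kelmans n (x y : 'I_n) (G : graph n) : graph n :=
  let S := nbhd G y :\: (nbhd G x :|: [set x]) in
  (G :\: [set [set y; z] | z in S]) :|: [set [set x; z] | z in S].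

Definition kelmans_step n (G : graph n) : graph n :=
  match [pick p : 'I_n * 'I_n | (p.1 < p.2)%N && (kelmans p.1 p.2 G != G)] with
  | Some p => kelmans p.1 p.2 G
  | None => G
  end.

(* K(G): iterate until invariant. Each non-trivial step strictly decreases
   sum over edges of the sum of vertex indices (bounded by 2 n^3), so
   2 n^3 + 1 iterations reach the fixed point. *)
Definition kelmans_closure n (G : graph n) : graph n :=
  iter (2 * n ^ 3).+1 (@kelmans_step n) G.

Local Open Scope ring_scope.
Definition adjmx n (G : graph n) : 'M[algC]_n :=
  \matrix_(i, j) (([set i; j] \in G) : nat)%:R.

Definition spec_radius_gt n (G : graph n) (c : algC) : Prop :=
  exists lam : algC, eigenvalue (adjmx G) lam /\ c < `|lam|.

(* {a, b} is an edge, a b given as 1-based labels in [n] *)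
Definition has_edge n (G : graph n) (a b : nat) : Prop :=
  exists u v : 'I_n, ((val u).+1 = a)%N /\ ((val v).+1 = b)%N /\ [set u; v] \in G.

From HB Require Import structures.
From mathcomp Require Import all_boot all_order all_algebra all_field.
From mathcomp Require Import perm zify ring.
Import Order.TTheory GRing.Theory Num.Theory.
Set Implicit Arguments. Unset Strict Implicit. Unset Printing Implicit Defensive.

(** K(G) is fixed by every K_xy with x < y, hence shifted: if
    {u,v} is an edge and a <= u, b <= v, then {a,b} is an edge.  Kelmans
    transformations preserve e(G), and they do not decrease rho(G): for a
    nonnegative vector f, either f itself or f with the entries at x and y
    swapped gives K_xy(G) a Rayleigh quotient at least that of G.  So if some
    pair {a,b} of the statement were a non-edge of K(G), then K(G) would have
    no edge {u,v} with u >= a, v >= b.  Counting the missing pairs gives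
    e(K(G)) <= C(n-1,2) + 1, and a weighted row-sum bound, with weights
    constant on the three blocks [1,a), [a,b), [b,n], gives rho(K(G)) <= n-2. *)

Lemma big_setU_disjoint R idx (op : Monoid.com_law idx) (I : finType)
    (A B : {set I}) (F : I -> R) :
  [disjoint A & B] ->
  \big[op/idx]_(i in A :|: B) F i =
    op (\big[op/idx]_(i in A) F i) (\big[op/idx]_(i in B) F i).
Proof. by move=> AB; rewrite -bigU //; apply: eq_bigl => i; rewrite !inE. Qed.

Lemma set2_inj (T : finType) (a : T) : injective (fun z : T => [set a; z]).
Proof.
move=> z1 z2 /= E.
have : z1 \in [set a; z2] by rewrite -E set22.
case/set2P => [a_z1|//]; subst z1.
have : z2 \in [set a; a] by rewrite E set22.
by case/set2P.
Qed.

Lemma card2_set2 (T : finType) (e : {set T}) (a b : T) :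
  #|e| = 2%N -> a \in e -> b \in e -> a != b -> e = [set a; b].
Proof.
move=> ce ae be ab; apply/eqP; rewrite eq_sym eqEcard; apply/andP; split.
  by apply/subsetP => i /set2P [->|->].
by rewrite ce cards2 ab.
Qed.

Lemma set2_eq_cases (T : finType) (a b u v : T) : [set a; b] = [set u; v] -> u != v ->
  (a = u /\ b = v) \/ (a = v /\ b = u).
Proof.
move=> E uv; have : b \in [set u; v] by rewrite -E set22.
have : a \in [set u; v] by rewrite -E set21.
case/set2P => aE /set2P [] bE; subst a b; try by [left | right].
  have : v \in [set u; u] by rewrite E set22.
  by rewrite setUid => /set1P vu; rewrite vu eqxx in uv.
have : u \in [set v; v] by rewrite E set21.
by rewrite setUid => /set1P uv'; rewrite uv' eqxx in uv.
Qed.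

Lemma prod_set2 (T : finType) (R : comPzSemiRingType) (f : T -> R) (a b : T) :
  a != b -> (\prod_(i in [set a; b]) f i = f a * f b)%R.
Proof. by move=> ab; rewrite big_setU1 ?big_set1 // inE. Qed.

Lemma sum_indicator_le (I : finType) (P : pred I) (F : I -> nat) (e : I -> bool) :
  (forall v, e v -> P v) -> \sum_v e v * F v <= \sum_(v | P v) F v.
Proof.
move=> eP; rewrite [X in _ <= X]big_mkcond /=; apply: leq_sum => v _.
by case ev: (e v); [rewrite mul1n (eP v ev) | rewrite mul0n].
Qed.

Lemma sum_ord_nat_range n lo hi (F : nat -> nat) : lo <= hi -> hi <= n ->
  \sum_(i < n | lo <= i < hi) F i = \sum_(lo <= i < hi) F i.
Proof.
move=> lh hn.
rewrite -(big_mkord (fun i => lo <= i < hi)) -(big_nat_widen _ _ _ _ _ hn).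
rewrite (@big_cat_nat _ _ _ lo) //= big_nat_cond big_pred0 ?add0n; last first.
  by move=> i; apply/negP => /andP [/andP [_ ilo] loi]; lia.
rewrite big_nat_cond [RHS]big_nat_cond; apply: eq_bigl => i.
by case: (lo <= i); rewrite ?andbF ?andbT.
Qed.

Lemma sum_nat_range_const lo hi (F : nat -> nat) c :
  (forall i, lo <= i < hi -> F i = c) -> \sum_(lo <= i < hi) F i = (hi - lo) * c.
Proof.
move=> Fc; rewrite -sum_nat_const_nat big_nat_cond [RHS]big_nat_cond.
by apply: eq_bigr => i /andP [/Fc].
Qed.

Lemma bin2_pred m : 0 < m -> 'C(m, 2) = 'C(m.-1, 2) + m.-1.
Proof. by case: m => [//|m] _; rewrite binS bin1. Qed.

(** * Kelmans transformations and the closure *)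

Section Kelmans.
Variable n : nat.
Implicit Types (G : graph n) (x y z : 'I_n).

Definition moved_nbrs G x y := nbhd G y :\: (nbhd G x :|: [set x]).

Lemma kelmansE G x y : kelmans x y G =
  (G :\: [set [set y; z] | z in moved_nbrs G x y])
    :|: [set [set x; z] | z in moved_nbrs G x y].
Proof. by []. Qed.

Lemma in_nbhd G x z : (z \in nbhd G x) = ([set x; z] \in G).
Proof. by rewrite inE. Qed.

Lemma in_moved_nbrs G x y z :
  (z \in moved_nbrs G x y) = [&& [set y; z] \in G, [set x; z] \notin G & z != x].
Proof. by rewrite !inE negb_or andbC andbA. Qed.

Lemma simple_edge_neq G u v : simple_graph G -> [set u; v] \in G -> u != v.
Proof.
move=> sG uvG; apply/negP=> /eqP uv; subst v.
by move: (sG _ uvG); rewrite setUid cards1.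
Qed.

Lemma big_kelmans R (idx : R) (op : Monoid.com_law idx) G x y
    (F : {set 'I_n} -> R) :
  op (\big[op/idx]_(e in kelmans x y G) F e)
     (\big[op/idx]_(z in moved_nbrs G x y) F [set y; z])
  = op (\big[op/idx]_(e in G) F e)
       (\big[op/idx]_(z in moved_nbrs G x y) F [set x; z]).
Proof.
rewrite kelmansE; set S := moved_nbrs G x y.
set D := [set [set y; z] | z in S]; set N := [set [set x; z] | z in S].
have DG : D \subset G.
  by apply/subsetP => _ /imsetP [z + ->]; rewrite in_moved_nbrs => /and3P [].
have GD_N : [disjoint G :\: D & N].
  rewrite -setI_eq0; apply/eqP/setP => e; rewrite !inE.
  apply/negbTE/negP => /andP [/andP [_ eG] /imsetP [z zS ez]].
  by move: zS; rewrite in_moved_nbrs -ez eG /= andbF.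
rewrite big_setU_disjoint // (@big_setID _ _ _ _ G D) (setIidPr DG).
rewrite !big_imset /=; try by move=> a b _ _; apply: set2_inj.
by rewrite Monoid.mulmAC (Monoid.mulmC op (\big[op/idx]_(i in S) F [set y; i])).
Qed.

Lemma kelmans_simple G x y : simple_graph G -> simple_graph (kelmans x y G).
Proof.
move=> sG e; rewrite kelmansE !inE => /orP [/andP [_ /sG //]|/imsetP [z zS ->]].
move: zS; rewrite in_moved_nbrs => /and3P [_ _ zx].
by rewrite cards2 eq_sym zx.
Qed.

Lemma card_kelmans G x y : #|kelmans x y G| = #|G|.
Proof. by have := big_kelmans addn G x y (fun _ => 1); rewrite !sum1_card => /addIn. Qed.

Lemma kelmans_id G x y : moved_nbrs G x y = set0 -> kelmans x y G = G.
Proof. by rewrite kelmansE => ->; rewrite !imset0 setD0 setU0. Qed.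

Definition kelmans_stable G := forall x y : 'I_n, x < y -> kelmans x y G = G.

Lemma stable_moved_nbrs G x y : kelmans_stable G -> x < y -> moved_nbrs G x y = set0.
Proof.
move=> stG xy; apply/setP => z; rewrite in_set0; apply/negP => zS.
have : [set x; z] \in kelmans x y G.
  by rewrite kelmansE inE; apply/orP; right; apply/imsetP; exists z.
by rewrite stG //; move: zS; rewrite in_moved_nbrs => /and3P [_ /negbTE ->].
Qed.

Lemma stable_edge_left G x y w : kelmans_stable G -> x < y ->
  [set y; w] \in G -> w != x -> [set x; w] \in G.
Proof.
move=> stG xy yw wx; apply/negPn/negP => xw.
have : w \in moved_nbrs G x y by rewrite in_moved_nbrs yw xw wx.
by rewrite stable_moved_nbrs // inE.
Qed.

Lemma stable_shifted G (a b u v : 'I_n) : kelmans_stable G -> a < b ->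
  [set u; v] \in G -> a <= u -> b <= v -> [set a; b] \in G.
Proof.
move=> stG ab uv au bv.
have av : [set a; v] \in G.
  have [<-//|u_a] := eqVneq u a.
  apply: (stable_edge_left stG _ uv); first by rewrite ltn_neqAle eq_sym u_a au.
  by rewrite neq_ltn (leq_trans ab bv) orbT.
have [<-//|v_b] := eqVneq v b.
rewrite setUC; apply: (stable_edge_left (y := v) stG); last by rewrite neq_ltn ab.
  by rewrite ltn_neqAle eq_sym v_b bv.
by rewrite setUC.
Qed.

Definition index_sum G : nat := \sum_(e in G) \sum_(i in e) (i : nat).

Lemma sum_set2 (u v : 'I_n) : u != v -> \sum_(i in [set u; v]) (i : nat) = u + v.
Proof. by move=> uv; rewrite big_setU1 ?big_set1 // inE. Qed.

Lemma index_sum_kelmans G x y : simple_graph G -> x < y -> kelmans x y G != G ->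
  index_sum (kelmans x y G) < index_sum G.
Proof.
move=> sG xy KG.
have [z0 z0S] : exists z0, z0 \in moved_nbrs G x y.
  have [S0|[z zS]] := set_0Vmem (moved_nbrs G x y); last by exists z.
  by rewrite kelmans_id ?eqxx in KG.
have sum_y z : z \in moved_nbrs G x y -> \sum_(i in [set y; z]) (i : nat) = y + z.
  by rewrite in_moved_nbrs => /and3P [/(simple_edge_neq sG) yz _ _]; apply: sum_set2.
have sum_x z : z \in moved_nbrs G x y -> \sum_(i in [set x; z]) (i : nat) = x + z.
  by rewrite in_moved_nbrs => /and3P [_ _ zx]; apply: sum_set2; rewrite eq_sym.
have := big_kelmans addn G x y (fun e => \sum_(i in e) (i : nat)).
rewrite -/(index_sum _) -/(index_sum G) (eq_bigr _ sum_y) (eq_bigr _ sum_x).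
rewrite !(big_setD1 z0 z0S) /=.
have : \sum_(i in moved_nbrs G x y :\ z0) (x + i)
         <= \sum_(i in moved_nbrs G x y :\ z0) (y + i).
  by apply: leq_sum => i _; rewrite leq_add2r ltnW.
set Sx := \sum_(i in _ :\ z0) (x + _); set Sy := \sum_(i in _ :\ z0) (y + _).
by move=> le_sum E; lia.
Qed.

Lemma index_sum_bound G : simple_graph G -> index_sum G <= 2 * n ^ 3.
Proof.
move=> sG.
have sum_le : index_sum G <= \sum_(e in G) (2 * n).
  apply: leq_sum => e /sG ce.
  apply: (@leq_trans (\sum_(i in e) n)); first by apply: leq_sum => i _; apply: ltnW.
  by rewrite sum_nat_const ce.
rewrite sum_nat_const in sum_le.
have cardG : #|G| <= 'C(n, 2).
  rewrite -[X in 'C(X, _)]card_ord -card_draws; apply: subset_leq_card.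
  by apply/subsetP => e /sG ce; rewrite inE ce.
have : 'C(n, 2) <= n * n.
  rewrite bin2; apply: (leq_trans (half_leq (leq_mul (leqnn n) (leq_pred n)))).
  by rewrite -divn2 leq_div.
nia.
Qed.

Lemma kelmans_stepP G : kelmans_step G = G \/ exists x y : 'I_n,
  [/\ x < y, kelmans x y G != G & kelmans_step G = kelmans x y G].
Proof.
rewrite /kelmans_step; case: pickP => [[x y] /= /andP [xy ne]|_]; last by left.
by right; exists x, y.
Qed.

Lemma kelmans_step_id G : kelmans_step G = G -> kelmans_stable G.
Proof.
rewrite /kelmans_step; case: pickP => [[x y] /= /andP [xy ne] E|none _].
  by rewrite E eqxx in ne.
by move=> x y xy; apply/eqP; have := none (x, y); rewrite /= xy => /negbFE.
Qed.

Lemma kelmans_step_simple G : simple_graph G -> simple_graph (kelmans_step G).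
Proof.
by move=> sG; case: (kelmans_stepP G) => [->|[x [y [_ _ ->]]]] //; apply: kelmans_simple.
Qed.

Lemma card_kelmans_step G : #|kelmans_step G| = #|G|.
Proof. by case: (kelmans_stepP G) => [->|[x [y [_ _ ->]]]] //; apply: card_kelmans. Qed.

Lemma iter_kelmans_step_simple k G :
  simple_graph G -> simple_graph (iter k (@kelmans_step n) G).
Proof. by move=> sG; elim: k => [//|k IH]; apply: kelmans_step_simple. Qed.

Lemma kelmans_closure_simple G : simple_graph G -> simple_graph (kelmans_closure G).
Proof. exact: iter_kelmans_step_simple. Qed.

Lemma card_kelmans_closure G : #|kelmans_closure G| = #|G|.
Proof. by rewrite /kelmans_closure; elim: _.+1 => [//|k IH] /=; rewrite card_kelmans_step. Qed.

Lemma kelmans_closure_stable G : simple_graph G -> kelmans_stable (kelmans_closure G).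
Proof.
move=> sG; pose h k := iter k (@kelmans_step n) G.
have fixed_or_lower k : kelmans_step (h k) = h k \/ index_sum (h k) + k <= index_sum G.
  elim: k => [|k [E|IH]]; [by right; rewrite addn0 | by left; rewrite /= E E |].
  case: (kelmans_stepP (h k)) => [E|[x [y [xy KG E]]]]; first by left; rewrite /= E E.
  have -> : h k.+1 = kelmans x y (h k) by rewrite -E.
  have lt : index_sum (kelmans x y (h k)) < index_sum (h k).
    exact: index_sum_kelmans (iter_kelmans_step_simple (k := k) sG) xy KG.
  by right; lia.
case: (fixed_or_lower (2 * n ^ 3).+1) => [|]; first exact: kelmans_step_id.
by have := index_sum_bound sG; lia.
Qed.

End Kelmans.

(** * The quadratic form of the adjacency matrix *)

Section Forms.
Variable n : nat.
Implicit Types (G : graph n) (x y z : 'I_n) (f g : 'I_n -> algC).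
Local Open Scope ring_scope.

Definition edge_form G f := \sum_(e in G) \prod_(i in e) f i.

Definition adj_form G f := \sum_i \sum_j (([set i; j] \in G) : nat)%:R * f i * f j.

Lemma sum_edges_at G a b (F : {set 'I_n} -> algC) : simple_graph G -> a != b ->
  \sum_(e in G | (a \in e) && (b \notin e)) F e = \sum_(z in nbhd G a :\ b) F [set a; z].
Proof.
move=> sG ab; rewrite -(big_imset _ (in2W (@set2_inj _ a))) /=.
apply: eq_bigl => e; apply/idP/idP.
  move=> /andP [eG /andP [ae be]].
  have /cards2P [u [v [uv Ee]]] : #|e| == 2%N by rewrite (sG e eG).
  have [z [Ez za]] : exists z, e = [set a; z] /\ z != a.
    move: ae; rewrite Ee => /set2P [au|av].
      by exists v; rewrite au eq_sym; split.
    by exists u; rewrite av setUC; split.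
  apply/imsetP; exists z => //; rewrite in_setD1 in_nbhd -Ez eG andbT.
  by apply/negP => /eqP zb; move: be; rewrite Ez zb set22.
move=> /imsetP [z]; rewrite in_setD1 in_nbhd => /andP [zb azG] ->.
by rewrite azG set21 /= !inE negb_or eq_sym ab eq_sym zb.
Qed.

Lemma sum_edges_at2 G a b (F : {set 'I_n} -> algC) : simple_graph G -> a != b ->
  \sum_(e in G | (a \in e) && (b \in e)) F e =
    if [set a; b] \in G then F [set a; b] else 0.
Proof.
move=> sG ab; case: ifP => abG.
  rewrite (big_pred1 [set a; b]) // => e /=; apply/idP/idP.
    by move=> /andP [eG /andP [ae be]]; rewrite (card2_set2 (sG e eG) ae be ab).
  by move=> /eqP ->; rewrite abG set21 set22.
rewrite big_pred0 // => e; apply/negP => /andP [eG /andP [ae be]].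
by move: abG; rewrite -(card2_set2 (sG e eG) ae be ab) eG.
Qed.

Definition edge_form_avoiding G x y f :=
  \sum_(e in G | (x \notin e) && (y \notin e)) \prod_(i in e) f i.

Lemma edge_form_split G x y f : simple_graph G -> x != y ->
  edge_form G f = edge_form_avoiding G x y f
    + f x * \sum_(z in nbhd G x :\ y) f z + f y * \sum_(z in nbhd G y :\ x) f z
    + (if [set x; y] \in G then f x * f y else 0).
Proof.
move=> sG xy.
have star a b : a != b -> \sum_(e in G | (a \in e) && (b \notin e)) \prod_(i in e) f i
                           = f a * \sum_(z in nbhd G a :\ b) f z.
  move=> ab; rewrite sum_edges_at // big_distrr /=; apply: eq_bigr => z.
  by rewrite in_setD1 in_nbhd => /andP [_ /(simple_edge_neq sG) az]; rewrite prod_set2.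
have both : \sum_(e in G | (x \in e) && (y \in e)) \prod_(i in e) f i
              = if [set x; y] \in G then f x * f y else 0.
  by rewrite sum_edges_at2 //; case: ifP => // _; rewrite prod_set2.
have assoc (P Q : pred {set 'I_n}) : \sum_(e | (e \in G) && P e && Q e) \prod_(i in e) f i
                                    = \sum_(e in G | P e && Q e) \prod_(i in e) f i.
  by apply: eq_bigl => e; rewrite andbA.
rewrite -both -star // -star 1?eq_sym // /edge_form_avoiding /edge_form.
rewrite (bigID (fun e : {set 'I_n} => x \in e)) /= (bigID (fun e : {set 'I_n} => y \in e)) /=.
rewrite [X in _ + X](bigID (fun e : {set 'I_n} => y \in e)) /= !assoc.
rewrite [\sum_(e in G | (y \in e) && (x \notin e)) _](eq_bigl _ _ (fun e => congr1 (andb _) (andbC _ _))).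
ring.
Qed.

Lemma edge_form_kelmans G x y h : simple_graph G ->
  edge_form (kelmans x y G) h + h y * \sum_(z in moved_nbrs G x y) h z
  = edge_form G h + h x * \sum_(z in moved_nbrs G x y) h z.
Proof.
move=> sG; have := big_kelmans +%R G x y (fun e => \prod_(i in e) h i).
have -> : \sum_(z in moved_nbrs G x y) \prod_(i in [set y; z]) h i
            = h y * \sum_(z in moved_nbrs G x y) h z.
  rewrite big_distrr; apply: eq_bigr => z.
  by rewrite in_moved_nbrs => /and3P [/(simple_edge_neq sG) yz _ _]; rewrite prod_set2.
have -> // : \sum_(z in moved_nbrs G x y) \prod_(i in [set x; z]) h i
               = h x * \sum_(z in moved_nbrs G x y) h z.
rewrite big_distrr; apply: eq_bigr => z.
by rewrite in_moved_nbrs => /and3P [_ _ zx]; rewrite prod_set2 // eq_sym.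
Qed.

Lemma moved_nbrsE G x y : simple_graph G ->
  moved_nbrs G x y = (nbhd G y :\ x) :\: (nbhd G x :\ y).
Proof.
move=> sG; apply/setP => z; rewrite in_moved_nbrs !inE.
case yzG: ([set y; z] \in G); last by rewrite !andbF.
have zy : z != y by rewrite eq_sym (simple_edge_neq sG yzG).
by rewrite zy /= andbT.
Qed.

Lemma edge_form_kelmansB G x y h : simple_graph G ->
  edge_form (kelmans x y G) h - edge_form G h
    = (h x - h y) * \sum_(z in moved_nbrs G x y) h z.
Proof.
move=> sG; move: (edge_form_kelmans x y h sG).
move: (edge_form _ h) (edge_form G h) (\sum_(z in moved_nbrs G x y) h z) => A B s E.
by rewrite -[A](addrK (h y * s)) E; ring.
Qed.

Lemma edge_form_kelmans_swap G x y f : simple_graph G -> x != y ->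
  edge_form (kelmans x y G) (fun i => f (tperm x y i)) - edge_form G f
    = (f y - f x) * \sum_(z in (nbhd G x :\ y) :\: (nbhd G y :\ x)) f z.
Proof.
move=> sG xy; pose g i := f (tperm x y i); rewrite -/g.
have gz z : z != x -> z != y -> g z = f z by move=> zx zy; rewrite /g tpermD // eq_sym.
have gx : g x = f y by rewrite /g tpermL.
have gy : g y = f x by rewrite /g tpermR.
have avoid : edge_form_avoiding G x y g = edge_form_avoiding G x y f.
  apply: eq_bigr => e /andP [_ /andP [xe ye]]; apply: eq_bigr => i ie.
  by apply: gz; [apply: (contraNneq _ xe) | apply: (contraNneq _ ye)] => <-.
have sum_nbhd a b : [set a; b] = [set x; y] ->
    \sum_(z in nbhd G a :\ b) g z = \sum_(z in nbhd G a :\ b) f z.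
  move=> abE; apply: eq_bigr => z; rewrite in_setD1 in_nbhd.
  move=> /andP [zb /(simple_edge_neq sG) az].
  have : z \notin [set a; b] by rewrite !inE negb_or zb eq_sym az.
  by rewrite abE !inE negb_or => /andP [zx zy]; apply: gz.
have sum_moved : \sum_(z in moved_nbrs G x y) g z = \sum_(z in moved_nbrs G x y) f z.
  apply: eq_bigr => z; rewrite in_moved_nbrs => /and3P [/(simple_edge_neq sG) yz _ zx].
  by apply: gz; rewrite // eq_sym.
have KgB := edge_form_kelmansB x y g sG.
rewrite gx gy sum_moved moved_nbrsE // in KgB.
have splitg := edge_form_split g sG xy.
rewrite avoid gx gy (sum_nbhd x y) // (sum_nbhd y x (setUC _ _)) in splitg.
have splitf := edge_form_split f sG xy.
set A := nbhd G x :\ y in KgB splitg splitf *.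
set B := nbhd G y :\ x in KgB splitg splitf *.
have splitA : \sum_(z in A) f z = \sum_(z in A :&: B) f z + \sum_(z in A :\: B) f z.
  exact: big_setID.
have splitB : \sum_(z in B) f z = \sum_(z in A :&: B) f z + \sum_(z in B :\: A) f z.
  by rewrite setIC; apply: big_setID.
move: KgB splitg splitf splitA splitB.
move: (edge_form _ g) (edge_form G g) (edge_form G f) (edge_form_avoiding G x y f).
move: (\sum_(z in A) f z) (\sum_(z in B) f z) (\sum_(z in A :&: B) f z).
move: ([set x; y] \in G) (\sum_(z in A :\: B) f z) (\sum_(z in B :\: A) f z).
move=> b sAB sBA sA sB sAIB WK Wg Wf W0 KgB.
by rewrite -[WK](subrK Wg) KgB => -> -> -> ->; case: b; ring.
Qed.

(* If f y <= f x, then f itself works; otherwise f with its values at x and y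
   swapped does. *)
Lemma edge_form_kelmans_ge G x y f : simple_graph G -> x != y ->
    (forall i, 0 <= f i) ->
  exists g, [/\ forall i, 0 <= g i, \sum_i g i ^+ 2 = \sum_i f i ^+ 2
              & edge_form G f <= edge_form (kelmans x y G) g].
Proof.
move=> sG xy f0.
have sum_ge0 (A : {set 'I_n}) : 0 <= \sum_(z in A) f z by apply: sumr_ge0.
have [fyx|fxy] := real_leP (ger0_real (f0 y)) (ger0_real (f0 x)).
  exists f; split => //.
  by rewrite -subr_ge0 edge_form_kelmansB // mulr_ge0 // subr_ge0.
exists (fun i => f (tperm x y i)); split => //.
  by rewrite [RHS](reindex_inj (@perm_inj _ (tperm x y))).
by rewrite -subr_ge0 edge_form_kelmans_swap // mulr_ge0 // subr_ge0 ltW.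
Qed.

Lemma edge_form_kelmans_step_ge G f : simple_graph G -> (forall i, 0 <= f i) ->
  exists g, [/\ forall i, 0 <= g i, \sum_i g i ^+ 2 = \sum_i f i ^+ 2
              & edge_form G f <= edge_form (kelmans_step G) g].
Proof.
move=> sG f0; case: (kelmans_stepP G) => [->|[x [y [xy _ ->]]]]; first by exists f.
by apply: edge_form_kelmans_ge => //; rewrite neq_ltn xy.
Qed.

Lemma edge_form_kelmans_closure_ge G f : simple_graph G -> (forall i, 0 <= f i) ->
  exists g, [/\ forall i, 0 <= g i, \sum_i g i ^+ 2 = \sum_i f i ^+ 2
              & edge_form G f <= edge_form (kelmans_closure G) g].
Proof.
move=> sG f0; rewrite /kelmans_closure; elim: (2 * n ^ 3).+1 => [|k [g [g0 gf fg]]].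
  by exists f; split.
have [h [h0 hg gh]] := edge_form_kelmans_step_ge (iter_kelmans_step_simple (k := k) sG) g0.
by exists h; split => //; [rewrite hg | apply: le_trans gh].
Qed.

Lemma adj_formE G f : simple_graph G -> adj_form G f = edge_form G f *+ 2.
Proof.
move=> sG; rewrite /adj_form pair_bigA /=.
rewrite (bigID (fun p : 'I_n * 'I_n => [set p.1; p.2] \in G)) /=.
rewrite [X in _ + X]big1 ?addr0; last by move=> p /negbTE ->; rewrite !mul0r.
rewrite (partition_big (fun p : 'I_n * 'I_n => [set p.1; p.2]) (mem G)) //=.
rewrite /edge_form -sumrMnl; apply: eq_bigr => e eG.
have /cards2P [u [v [uv Ee]]] : #|e| == 2%N by rewrite (sG e eG).
rewrite (bigD1 (u, v)) /=; last by rewrite -Ee eG eqxx.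
rewrite (bigD1 (v, u)) /=; last first.
  by rewrite setUC -Ee eG eqxx /= -pair_eqE /= negb_and eq_sym uv.
rewrite big1 ?addr0; last first.
  move=> [a b] /andP [/andP [/andP [_ /eqP /= abe] ne1] ne2].
  rewrite Ee in abe; move: ne1 ne2.
  by case: (set2_eq_cases abe uv) => [[-> ->]|[-> ->]]; rewrite eqxx ?andbF.
by rewrite [[set v; u]]setUC -Ee eG Ee prod_set2 // mulr2n !mul1r [f v * f u]mulrC.
Qed.

(* Test the eigenvalue equation v A = lam v against the conjugate of v, and
   bound it entrywise by the form at |v|. *)
Lemma eigenvalue_adj_form G lam : eigenvalue (adjmx G) lam ->
  exists f, [/\ forall i, 0 <= f i, 0 < \sum_i f i ^+ 2
              & `|lam| * \sum_i f i ^+ 2 <= adj_form G f].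
Proof.
case/eigenvalueP => v vA v0; pose f i := `|v 0 i|.
have s0 : 0 <= \sum_i f i ^+ 2 by apply: sumr_ge0 => i _; rewrite exprn_ge0 ?normr_ge0.
exists f; split => [i||]; first exact: normr_ge0.
  rewrite lt_def s0 andbT; apply: contra v0 => /eqP s_eq0; apply/eqP/rowP => i.
  have fi_eq0 := psumr_eq0P (fun i _ => exprn_ge0 2 (normr_ge0 (v 0 i))) s_eq0.
  by move/eqP: (fi_eq0 i isT); rewrite expf_eq0 /= normr_eq0 !mxE => /eqP.
have lamE : lam * \sum_j f j ^+ 2 = \sum_j \sum_i v 0 i * adjmx G i j * (v 0 j)^*.
  rewrite mulr_sumr; apply: eq_bigr => j _; rewrite /f normCK mulrA.
  have := congr1 (fun M : 'M[algC]_(1, n) => M 0 j) vA; rewrite !mxE => <-.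
  by rewrite big_distrl.
rewrite -(ger0_norm s0) -normrM lamE.
apply: (le_trans (ler_norm_sum _ _ _)).
rewrite /adj_form exchange_big /=; apply: ler_sum => j _.
apply: (le_trans (ler_norm_sum _ _ _)); apply: ler_sum => i _.
by rewrite !normrM norm_conjC /adjmx mxE normr_nat -mulrA [_ * f i]mulrC mulrA.
Qed.

Lemma amgm_weighted (R : numFieldType) (a b cu cv : R) :
  0 <= a -> 0 <= b -> 0 < cu -> 0 < cv ->
  a * b *+ 2 <= cv / cu * a ^+ 2 + cu / cv * b ^+ 2.
Proof.
move=> a0 b0 cu0 cv0; rewrite -subr_ge0.
have -> : cv / cu * a ^+ 2 + cu / cv * b ^+ 2 - a * b *+ 2
            = (cv * a - cu * b) ^+ 2 / (cu * cv).
  by field; rewrite !gt_eqF.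
have real_diff : cv * a - cu * b \is Num.real.
  by apply: rpredB; apply: rpredM; apply: ger0_real; rewrite // ltW.
by rewrite divr_ge0 ?real_exprn_even_ge0 // mulr_ge0 ?ltW.
Qed.

(* Bound each term 2 g u g v by weighted AM-GM, then sum row by row. *)
Lemma adj_form_le_weighted (H : graph n) (c : 'I_n -> nat) (mu : nat) g :
  (forall i, 0 < c i)%N ->
  (forall u, \sum_v ([set u; v] \in H) * c v <= mu * c u)%N ->
  (forall i, 0 <= g i) -> adj_form H g <= mu%:R * \sum_i g i ^+ 2.
Proof.
move=> c0 hc g0.
pose a u v : algC := (([set u; v] \in H) : nat)%:R.
pose C u : algC := (c u)%:R.
have C0 u : 0 < C u by rewrite ltr0n.
have asym u v : a u v = a v u by rewrite /a setUC.
pose T := \sum_u \sum_v a u v * (C v / C u * g u ^+ 2).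
have form_le : adj_form H g *+ 2 <= T *+ 2.
  have -> : T *+ 2 = T + \sum_u \sum_v a u v * (C u / C v * g v ^+ 2).
    rewrite mulr2n; congr (_ + _); rewrite /T exchange_big /=.
    by apply: eq_bigr => v _; apply: eq_bigr => u _; rewrite asym.
  rewrite /adj_form -sumrMnl /T -big_split /=; apply: ler_sum => u _.
  rewrite -sumrMnl -big_split /=; apply: ler_sum => v _.
  rewrite -mulrDr -mulrA -mulrnAr; apply: ler_wpM2l; first exact: ler0n.
  exact: amgm_weighted.
rewrite lerMn2r /= in form_le; apply: (le_trans form_le).
rewrite /T mulr_sumr; apply: ler_sum => u _.
have -> : \sum_v a u v * (C v / C u * g u ^+ 2) = g u ^+ 2 / C u * \sum_v a u v * C v.
  by rewrite mulr_sumr; apply: eq_bigr => v _; ring.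
have row_le : \sum_v a u v * C v <= mu%:R * C u.
  rewrite /a /C -natrM; under eq_bigr do rewrite -natrM.
  by rewrite -natr_sum ler_nat.
apply: (le_trans (ler_wpM2l _ row_le)); first by rewrite divr_ge0 ?exprn_ge0 // ltW.
have Cu0 : C u != 0 by rewrite gt_eqF.
by have -> : g u ^+ 2 / C u * (mu%:R * C u) = mu%:R * g u ^+ 2 by field.
Qed.

End Forms.

(** * Graphs missing a block of edges *)

Section StepWeight.
Variables (n a b cL cM cT : nat).
Hypotheses (ab : a <= b) (bn : b <= n).

Definition step_weight (i : nat) : nat := if i < a then cL else if i < b then cM else cT.

Lemma sum_step_weight_lt_a : \sum_(i < n | 0 <= i < a) step_weight i = a * cL.
Proof.
rewrite sum_ord_nat_range // ?(leq_trans ab) // (sum_nat_range_const (c := cL)) ?subn0 //.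
by move=> i /andP [_ ia]; rewrite /step_weight ia.
Qed.

Lemma sum_step_weight_lt_b :
  \sum_(i < n | 0 <= i < b) step_weight i = a * cL + (b - a) * cM.
Proof.
rewrite sum_ord_nat_range // (@big_cat_nat _ _ _ a) //=.
rewrite (sum_nat_range_const (c := cL)) ?subn0; last first.
  by move=> i /andP [_ ia]; rewrite /step_weight ia.
rewrite (sum_nat_range_const (c := cM)) // => i /andP [ai ib].
by rewrite /step_weight ib ltnNge ai.
Qed.

Lemma sum_step_weight :
  \sum_(i < n | 0 <= i < n) step_weight i = a * cL + (b - a) * cM + (n - b) * cT.
Proof.
rewrite sum_ord_nat_range // (@big_cat_nat _ _ _ b) //= (@big_cat_nat _ _ _ a) //=.
rewrite (sum_nat_range_const (c := cL)) ?subn0; last first.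
  by move=> i /andP [_ ia]; rewrite /step_weight ia.
rewrite (sum_nat_range_const (c := cM)); last first.
  by move=> i /andP [ai ib]; rewrite /step_weight ib ltnNge ai.
rewrite (sum_nat_range_const (c := cT)) // => i /andP [bi _].
by rewrite /step_weight ltnNge (leq_trans ab bi) ltnNge bi.
Qed.

End StepWeight.

Definition misses_block n (H : graph n) (a b : nat) :=
  forall u v : 'I_n, [set u; v] \in H -> ~~ ((a <= u) && (b <= v)).

Lemma misses_block_le n (H : graph n) a b b' :
  misses_block H a b -> b <= b' -> misses_block H a b'.
Proof.
move=> miss bb' u v uv; apply/negP => /andP [au bv].
by move: (miss u v uv); rewrite au (leq_trans bb' bv).
Qed.

(* A vertex u >= b only has neighbours below a, and a vertex in [a, b) only
   has neighbours below b. *)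
Lemma step_weight_row_sum n (H : graph n) a b cL cM cT mu :
  a < b -> b <= n -> simple_graph H -> misses_block H a b ->
  a * cL <= mu * cT ->
  a * cL + (b - a) * cM <= mu * cM + cM ->
  (0 < a -> a * cL + (b - a) * cM + (n - b) * cT <= mu * cL + cL) ->
  forall u : 'I_n, \sum_v ([set u; v] \in H) * step_weight a b cL cM cT v
                     <= mu * step_weight a b cL cM cT u.
Proof.
move=> ab bn sH miss rowT rowM rowL u; have ab' := ltnW ab.
case: (leqP b u) => bu.
  have -> : step_weight a b cL cM cT u = cT.
    by rewrite /step_weight ltnNge (leq_trans ab' bu) ltnNge bu.
  apply: (leq_trans (sum_indicator_le (P := fun v : 'I_n => 0 <= v < a) _ _)).
    move=> v uv /=; rewrite ltnNge; apply/negP => av.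
    by move: (miss v u); rewrite setUC uv av bu => /(_ isT).
  by rewrite sum_step_weight_lt_a.
case: (leqP a u) => au.
  have wu : step_weight a b cL cM cT u = cM by rewrite /step_weight ltnNge au bu.
  rewrite wu; apply: (leq_trans (sum_indicator_le
    (P := fun v : 'I_n => (0 <= v < b) && (v != u)) _ _)).
    move=> v uv /=; rewrite eq_sym (simple_edge_neq sH uv) andbT ltnNge.
    by apply/negP => bv; move: (miss u v); rewrite uv au bv => /(_ isT).
  have := sum_step_weight_lt_b cL cM cT ab' bn; rewrite (bigD1 u) /= ?bu // wu.
  by move=> sum_b; rewrite -(leq_add2l cM) sum_b; lia.
have wu : step_weight a b cL cM cT u = cL by rewrite /step_weight au.
rewrite wu; apply: (leq_trans (sum_indicator_le
  (P := fun v : 'I_n => (0 <= v < n) && (v != u)) _ _)).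
  by move=> v uv /=; rewrite eq_sym (simple_edge_neq sH uv) andbT ltn_ord.
have := sum_step_weight cL cM cT ab' bn; rewrite (bigD1 u) /= ?ltn_ord // wu.
have := rowL (leq_ltn_trans (leq0n u) au).
by move=> rowL_pos sum_n; rewrite -(leq_add2l cL) sum_n; lia.
Qed.

Section MissingBlock.
Variable n : nat.
Implicit Types (H : graph n) (g : 'I_n -> algC).

Lemma adj_form_le_misses_block H a b cL cM cT g :
  simple_graph H -> a < b -> b <= n -> misses_block H a b ->
  0 < cL -> 0 < cM -> 0 < cT ->
  a * cL <= (n - 2) * cT ->
  a * cL + (b - a) * cM <= (n - 2) * cM + cM ->
  (0 < a -> a * cL + (b - a) * cM + (n - b) * cT <= (n - 2) * cL + cL) ->
  (forall i, 0 <= g i)%R -> (adj_form H g <= (n - 2)%:R * \sum_i g i ^+ 2)%R.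
Proof.
move=> sH ab bn miss pL pM pT rowT rowM rowL g0.
apply: (adj_form_le_weighted (c := fun i : 'I_n => step_weight a b cL cM cT i)) => //.
  by move=> i; rewrite /step_weight; case: ifP => // _; case: ifP.
exact: step_weight_row_sum.
Qed.

Lemma adj_form_le_misses_first H g : 4 <= n -> simple_graph H ->
  misses_block H 0 (n - 1) -> (forall i, 0 <= g i)%R ->
  (adj_form H g <= (n - 2)%:R * \sum_i g i ^+ 2)%R.
Proof.
move=> n4 sH miss g0.
by apply: (adj_form_le_misses_block (cL := 1) (cM := 1) (cT := 1) sH _ _ miss) => //; lia.
Qed.

Lemma adj_form_le_misses_second H g : 4 <= n -> simple_graph H ->
  misses_block H 1 (n - 2) -> (forall i, 0 <= g i)%R ->
  (adj_form H g <= (n - 2)%:R * \sum_i g i ^+ 2)%R.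
Proof.
move=> n4 sH miss g0.
by apply: (adj_form_le_misses_block (cL := 2) (cM := 2) (cT := 1) sH _ _ miss) => //; lia.
Qed.

(* With a = k + 2 and n = 2a + 1 + d, the weights are
   (2a - 1)(n - 2), a(n - 2) and a(2a - 1) on the three blocks. *)
Lemma adj_form_le_misses_middle H g k d : n = 2 * k + 5 + d -> simple_graph H ->
  misses_block H (k + 2) (n - (k + 2)) -> (forall i, 0 <= g i)%R ->
  (adj_form H g <= (n - 2)%:R * \sum_i g i ^+ 2)%R.
Proof.
move=> nE sH miss g0.
have n2E : n - 2 = 2 * k + 3 + d by lia.
have bE : n - (k + 2) - (k + 2) = d + 1 by lia.
have nbE : n - (n - (k + 2)) = k + 2 by lia.
apply: (adj_form_le_misses_block (cL := (2 * k + 3) * (2 * k + 3 + d))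
  (cM := (k + 2) * (2 * k + 3 + d)) (cT := (k + 2) * (2 * k + 3)) sH _ _ miss);
  rewrite ?n2E ?bE ?nbE ?muln_gt0 //; lia.
Qed.

Definition vertex_pairs : {set {set 'I_n}} := [set e : {set 'I_n} | #|e| == 2].

Definition pairs_below (a : nat) (w : 'I_n) : {set {set 'I_n}} :=
  [set [set w; u] | u in [set u : 'I_n | a <= u < w]].

Lemma card_pairs_below a (w : 'I_n) : a <= w -> #|pairs_below a w| = w - a.
Proof.
move=> aw; rewrite card_imset; last exact: set2_inj.
rewrite -sum1_card (eq_bigl (fun u : 'I_n => a <= u < w)); last by move=> u; rewrite inE.
by rewrite (@sum_ord_nat_range n a w (fun=> 1)) ?(ltnW (ltn_ord w)) // sum_nat_const_nat muln1.
Qed.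

Lemma pairs_below_sub a (w : 'I_n) : pairs_below a w \subset vertex_pairs.
Proof.
apply/subsetP => e /imsetP [u]; rewrite inE => /andP [_ uw] ->.
by rewrite inE cards2 neq_ltn uw orbT.
Qed.

Lemma misses_block_pairs_below H a b (w : 'I_n) :
  misses_block H a b -> b <= w -> [disjoint H & pairs_below a w].
Proof.
move=> miss bw; rewrite -setI_eq0; apply/eqP/setP => e; rewrite !inE.
apply/negbTE/negP => /andP [eH /imsetP [u]]; rewrite inE => /andP [au _] eE.
by move: (miss u w); rewrite setUC -eE eH au bw => /(_ isT).
Qed.

Lemma card_simple_disjoint H (M : {set {set 'I_n}}) : simple_graph H ->
  M \subset vertex_pairs -> [disjoint H & M] -> #|H| + #|M| <= 'C(n, 2).
Proof.
move=> sH Mpairs HM; rewrite -[X in 'C(X, _)]card_ord -card_draws -cardsUI.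
rewrite (disjoint_setI0 HM) cards0 addn0; apply: subset_leq_card.
by rewrite subUset Mpairs andbT; apply/subsetP => e /sH ce; rewrite inE ce.
Qed.

Lemma card_misses_first H : 4 <= n -> simple_graph H ->
  misses_block H 0 (n - 1) -> #|H| <= 'C(n.-1, 2).
Proof.
move=> n4 sH miss; have w_lt : n - 1 < n by lia.
have := card_simple_disjoint sH (pairs_below_sub 0 (Ordinal w_lt))
          (misses_block_pairs_below (w := Ordinal w_lt) miss (leqnn _)).
by rewrite card_pairs_below // bin2_pred /=; lia.
Qed.

Lemma card_misses_block H a b : 4 <= n -> simple_graph H -> misses_block H a b ->
  b <= n - 2 -> 2 * a + 1 <= n -> #|H| <= ('C(n.-1, 2)).+1.
Proof.
move=> n4 sH miss bn an.
have w1_lt : n - 1 < n by lia.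
have w2_lt : n - 2 < n by lia.
pose w1 := Ordinal w1_lt; pose w2 := Ordinal w2_lt.
have disj12 : [disjoint pairs_below a w1 & pairs_below a w2].
  rewrite -setI_eq0; apply/eqP/setP => e; rewrite !inE.
  apply/negbTE/negP => /andP [/imsetP [u _ eE1] /imsetP [v]]; rewrite inE => /andP [_ vw] eE2.
  have : w1 \in e by rewrite eE1 set21.
  by rewrite eE2 => /set2P [] w1E; move: (congr1 val w1E) vw => /=; lia.
have sub12 : pairs_below a w1 :|: pairs_below a w2 \subset vertex_pairs.
  by rewrite subUset !pairs_below_sub.
have disjH : [disjoint H & pairs_below a w1 :|: pairs_below a w2].
  rewrite -setI_eq0 setIUr !disjoint_setI0 ?setU0 //;
    by apply: (misses_block_pairs_below miss) => /=; lia.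
have := card_simple_disjoint sH sub12 disjH.
rewrite cardsU disjoint_setI0 // cards0 subn0 !card_pairs_below /=; try lia.
by rewrite bin2_pred; lia.
Qed.

Definition below_threshold H := #|H| <= ('C(n.-1, 2)).+1 /\
  forall g, (forall i, 0 <= g i)%R -> (adj_form H g <= (n - 2)%:R * \sum_i g i ^+ 2)%R.

Lemma misses_first_below_threshold H : 4 <= n -> simple_graph H ->
  misses_block H 0 (n - 1) -> below_threshold H.
Proof.
move=> n4 sH miss; split => [|g g0]; last exact: adj_form_le_misses_first.
by have := card_misses_first n4 sH miss; lia.
Qed.

Lemma misses_second_below_threshold H : 4 <= n -> simple_graph H ->
  misses_block H 1 (n - 2) -> below_threshold H.
Proof.
move=> n4 sH miss; split => [|g g0]; last exact: adj_form_le_misses_second.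
by apply: (card_misses_block n4 sH miss); lia.
Qed.

Lemma misses_middle_below_threshold H a : simple_graph H -> 2 <= a -> 2 * a + 1 <= n ->
  misses_block H a (n - a) -> below_threshold H.
Proof.
move=> sH a2 an miss; split => [|g g0].
  by apply: (card_misses_block _ sH miss); lia.
apply: (@adj_form_le_misses_middle _ _ (a - 2) (n - 2 * a - 1)) => //; first lia.
by rewrite subnK.
Qed.

End MissingBlock.

Lemma kelmans_closure_above_threshold n (G : graph n) : simple_graph G ->
  ('C(n.-1, 2)).+1 < nedges G \/ spec_radius_gt G ((n - 2)%:R)%R ->
  ~ below_threshold (kelmans_closure G).
Proof.
move=> sG [many_edges|[lam [eig rho_gt]]] [card_le form_le].
  by move: many_edges; rewrite /nedges -(card_kelmans_closure G); lia.
have [f [f0 f_pos lam_le]] := eigenvalue_adj_form eig.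
have [g [g0 gf fg]] := edge_form_kelmans_closure_ge sG f0.
have := form_le g g0; rewrite gf (adj_formE _ (kelmans_closure_simple sG)) => g_le.
rewrite (adj_formE _ sG) in lam_le.
have : (`|lam| * \sum_i f i ^+ 2 <= (n - 2)%:R * \sum_i f i ^+ 2)%R.
  by apply: (le_trans lam_le); apply: le_trans g_le; rewrite lerMn2r.
by rewrite ler_pM2r // => /(lt_le_trans rho_gt); rewrite ltxx.
Qed.

Lemma has_edge_stable n (H : graph n) a b : kelmans_stable H -> 1 <= a -> a < b -> b <= n ->
  (misses_block H (a - 1) (b - 1) -> False) -> has_edge H a b.
Proof.
move=> stH a1 ab bn no_miss.
have a_lt : a - 1 < n by lia.
have b_lt : b - 1 < n by lia.
case abH: ([set Ordinal a_lt; Ordinal b_lt] \in H).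
  by exists (Ordinal a_lt), (Ordinal b_lt); split => //=; lia.
exfalso; apply: no_miss => u v uvH; apply/negP => /andP [au bv].
have ab' : Ordinal a_lt < Ordinal b_lt by rewrite /=; lia.
by rewrite (stable_shifted stH ab' uvH au bv) in abH.
Qed.

Theorem mainTheorem7 (n : nat) (G : graph n) :
  (4 <= n)%N -> simple_graph G ->
  ((('C(n.-1, 2)).+1 < nedges G)%N \/ spec_radius_gt G ((n - 2)%:R)%R) ->
  (forall j : nat, (3 <= j <= (n.+1)./2)%N ->
     has_edge (kelmans_closure G) j (n + 2 - j)) /\
  (forall k : nat, (1 <= k <= n./2)%N ->
     has_edge (kelmans_closure G) k (n + 1 - k)).
Proof.
move=> n4 sG hyp; have sH := kelmans_closure_simple sG.
have stH := kelmans_closure_stable sG.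
have above := kelmans_closure_above_threshold sG hyp.
split=> [j /andP [j3 jn] | k /andP [k1 kn]].
  have {jn} jn : 2 * j <= n + 1 by move: jn; rewrite -divn2 leq_divRL //; lia.
  apply: has_edge_stable => //; try lia; move=> miss; apply: above.
  apply: (misses_middle_below_threshold (a := j - 1)) => //; try lia.
  by rewrite (_ : n - (j - 1) = n + 2 - j - 1) //; lia.
have {kn} kn : 2 * k <= n by move: kn; rewrite -divn2 leq_divRL //; lia.
apply: has_edge_stable => //; try lia; move=> miss; apply: above.
case: (ltngtP k 2) => [k_lt2|k_gt2|k_eq2].
- rewrite (_ : k = 1) in miss; last lia.
  apply: misses_first_below_threshold => //.
  by apply: (misses_block_le miss); lia.
- apply: (misses_middle_below_threshold (a := k - 1)) => //; try lia.
  by apply: (misses_block_le miss); lia.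
- rewrite k_eq2 in miss; apply: misses_second_below_threshold => //.
  by apply: (misses_block_le miss); lia.
Qed.
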